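(* A semiring $R$ is $k$-simple if and only if it is $k$-congruence-simple.
   Context: A semiring $(R,+,\cdot)$ is a set with two binary operations such that $(R,+)$ is a commutative semigroup, $(R,\cdot)$ is a semigroup, and multiplication distributes over addition from both sides; no additive neutral element or identity is assumed. An element $0\in R$ is a zero of $R$ if $0+r=r$ and $0r=r0=0$ for all $r\in R$. An ideal of $R$ is a nonempty subset $A\subseteq R$ with $a+b\in A$ and $ra,ar\in A$ for all $a,b\in A$, $r\in R$; the trivial ideals are $R$ and, if $R$ has a zero $0$, $\{0\}$. For an ideal $A$, its $k$-closure is $\overline{A}=\{x\in R\mid x+a=b \text{ for some } a,b\in A\}$, and $A$ is a $k$-ideal if $A=\overline{A}$. $R$ is $k$-simple if it has no $k$-ideals other than the trivial ideals. A congruence on $R$ is an equivalence relation $\equiv$ such that $a\equiv b$ implies $a+c\equiv b+c$, $ac\equiv bc$, $ca\equiv cb$ for all $a,b,c\in R$. For an ideal $A$, $\kappa_A$ is the congruence defined by $x\,\kappa_A\,y$ iff $x+a=y+b$ for some $a,b\in A$. A congruence $\theta$ is a $k$-congruence if $\theta=\kappa_A$ for some ideal $A$ of $R$. $R$ is $k$-congruence-simple if it has no $k$-congruences other than $R\times R$ and the identity relation $\mathrm{id}_R$. Throughout, $|R|\geq 2$. *)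

(* semirings in the paper's sense (no additive/multiplicative
   neutral assumed), given by a carrier type and two operations. Subsets and
   relations are predicates; set equality is pointwise <->. *)

Section SemiringDefs.
Context {R : Type} (add mul : R -> R -> R).

Definition is_semiring : Prop :=
  (forall x y z, add x (add y z) = add (add x y) z) /\
  (forall x y, add x y = add y x) /\
  (forall x y z, mul x (mul y z) = mul (mul x y) z) /\
  (forall x y z, mul x (add y z) = add (mul x y) (mul x z)) /\
  (forall x y z, mul (add x y) z = add (mul x z) (mul y z)).

Definition is_zero (z : R) : Prop :=
  forall r, add z r = r /\ mul z r = z /\ mul r z = z.

Definition is_ideal (A : R -> Prop) : Prop :=
  (exists a, A a) /\
  (forall a b, A a -> A b -> A (add a b)) /\
  (forall r a, A a -> A (mul r a) /\ A (mul a r)).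

Definition k_closure (A : R -> Prop) (x : R) : Prop :=
  exists a b, A a /\ A b /\ add x a = b.

Definition is_k_ideal (A : R -> Prop) : Prop :=
  is_ideal A /\ (forall x, A x <-> k_closure A x).

Definition trivial_ideal (A : R -> Prop) : Prop :=
  (forall x, A x) \/ (exists z, is_zero z /\ forall x, A x <-> x = z).

Definition k_simple : Prop :=
  forall A, is_k_ideal A -> trivial_ideal A.

Definition is_congruence (th : R -> R -> Prop) : Prop :=
  (forall x, th x x) /\
  (forall x y, th x y -> th y x) /\
  (forall x y z, th x y -> th y z -> th x z) /\
  (forall a b c, th a b ->
     th (add a c) (add b c) /\ th (mul a c) (mul b c) /\ th (mul c a) (mul c b)).

Definition kappa (A : R -> Prop) (x y : R) : Prop :=
  exists a b, A a /\ A b /\ add x a = add y b.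

Definition is_k_congruence (th : R -> R -> Prop) : Prop :=
  is_congruence th /\
  exists A, is_ideal A /\ (forall x y, th x y <-> kappa A x y).

Definition k_congruence_simple : Prop :=
  forall th, is_k_congruence th ->
    (forall x y, th x y) \/ (forall x y, th x y <-> x = y).

End SemiringDefs.

(* Pass between ideals and k-congruences via A |-> kappa_A.  For any ideal A
   the k-closure of A is a k-ideal; if it is R then kappa_A is full, and if it
   is a zero singleton {z} then A = {z} and kappa_A is the identity.
   Conversely kappa_A full forces a k-ideal A to be R, and kappa_A the identity
   forces a + b = b on A, so A is a single zero. *)


Section KIdealsAndKCongruences.

Variables (R : Type) (add mul : R -> R -> R).
Hypothesis semiring_R : is_semiring add mul.

Lemma addA x y z : add x (add y z) = add (add x y) z.
Proof. apply semiring_R. Qed.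

Lemma addC x y : add x y = add y x.
Proof. apply semiring_R. Qed.

Lemma mulDr x y z : mul x (add y z) = add (mul x y) (mul x z).
Proof. apply semiring_R. Qed.

Lemma mulDl x y z : mul (add x y) z = add (mul x z) (mul y z).
Proof. apply semiring_R. Qed.

Lemma addAC x y z : add (add x y) z = add (add x z) y.
Proof. now rewrite <- !addA, (addC y z). Qed.

Lemma addACA a b c d : add (add a b) (add c d) = add (add a c) (add b d).
Proof. now rewrite <- !addA, (addA b c d), (addC b c), <- (addA c b d). Qed.

Lemma ideal_sub_k_closure (B : R -> Prop) x :
  is_ideal add mul B -> B x -> k_closure add B x.
Proof.
  intros [[a Ba] [add_B _]] Bx. exists a, (add x a). auto.
Qed.

Variable A : R -> Prop.
Hypothesis ideal_A : is_ideal add mul A.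

Lemma ideal_add a b : A a -> A b -> A (add a b).
Proof. apply ideal_A. Qed.

Lemma ideal_mull r a : A a -> A (mul r a).
Proof. apply ideal_A. Qed.

Lemma ideal_mulr r a : A a -> A (mul a r).
Proof. apply ideal_A. Qed.

Lemma k_closure_ideal : is_ideal add mul (k_closure add A).
Proof.
  split; [|split].
  - destruct ideal_A as [[a Aa] _]. exists a. now apply ideal_sub_k_closure.
  - intros x y [a [b [Aa [Ab E]]]] [c [d [Ac [Ad F]]]].
    exists (add a c), (add b d). repeat split; auto using ideal_add.
    now rewrite addACA, E, F.
  - intros r x [a [b [Aa [Ab E]]]]. split.
    + exists (mul r a), (mul r b). repeat split; auto using ideal_mull.
      now rewrite <- mulDr, E.
    + exists (mul a r), (mul b r). repeat split; auto using ideal_mulr.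
      now rewrite <- mulDl, E.
Qed.

Lemma k_closure_k_ideal : is_k_ideal add mul (k_closure add A).
Proof.
  split; [exact k_closure_ideal|]. intros x. split.
  - apply ideal_sub_k_closure, k_closure_ideal.
  - (* x + u = v with u + a = b and v + c = d gives x + (b + c) = d + a *)
    intros [u [v [[a [b [Aa [Ab E]]]] [[c [d [Ac [Ad F]]]] G]]]].
    exists (add b c), (add d a). repeat split; auto using ideal_add.
    now rewrite <- E, !addA, G, addAC, F.
Qed.

Lemma kappa_congruence : is_congruence add mul (kappa add A).
Proof.
  split; [|split; [|split]].
  - intros x. destruct ideal_A as [[a Aa] _]. now exists a, a.
  - intros x y [a [b [Aa [Ab E]]]]. now exists b, a.
  - intros x y w [a [b [Aa [Ab E]]]] [c [d [Ac [Ad F]]]].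
    exists (add a c), (add d b). repeat split; auto using ideal_add.
    now rewrite addA, E, addAC, F, <- addA.
  - intros x y c [a [b [Aa [Ab E]]]]. repeat split.
    + exists a, b. repeat split; auto. now rewrite (addAC x), (addAC y), E.
    + exists (mul a c), (mul b c). repeat split; auto using ideal_mulr.
      now rewrite <- !mulDl, E.
    + exists (mul c a), (mul c b). repeat split; auto using ideal_mull.
      now rewrite <- !mulDr, E.
Qed.

Lemma kappa_k_congruence : is_k_congruence add mul (kappa add A).
Proof.
  split; [exact kappa_congruence|]. exists A. split; [exact ideal_A | tauto].
Qed.

Lemma kappa_full_of_k_closure_full :
  (forall x, k_closure add A x) -> forall x y, kappa add A x y.
Proof.
  intros full x y.
  destruct (full x) as [a [b [Aa [Ab E]]]], (full y) as [c [d [Ac [Ad F]]]].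
  exists (add a d), (add c b). repeat split; auto using ideal_add.
  now rewrite !addA, E, F, addC.
Qed.

Lemma kappa_eq_of_k_closure_zero z :
  is_zero add mul z -> (forall x, k_closure add A x <-> x = z) ->
  forall x y, kappa add A x y <-> x = y.
Proof.
  intros zero_z closure_z x y. split.
  - intros [a [b [Aa [Ab E]]]].
    assert (a = z) by now apply closure_z, ideal_sub_k_closure.
    assert (b = z) by now apply closure_z, ideal_sub_k_closure.
    subst a b. rewrite (addC x), (addC y), (proj1 (zero_z x)), (proj1 (zero_z y)) in E.
    exact E.
  - intros ->. destruct ideal_A as [[a Aa] _]. now exists a, a.
Qed.

Lemma k_ideal_full_of_kappa_full :
  (forall x, A x <-> k_closure add A x) ->
  (forall x y, kappa add A x y) -> forall x, A x.
Proof.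
  intros closed full x. destruct ideal_A as [[a0 Aa0] _].
  destruct (full x a0) as [a [b [Aa [Ab E]]]].
  apply closed. exists a, (add a0 b). auto using ideal_add.
Qed.

(* If kappa_A is the identity, then a + b = b for all a, b in A, which forces
   A to be a single element absorbing for + and, A being an ideal, for *. *)
Lemma ideal_zero_of_kappa_eq :
  (forall x y, kappa add A x y <-> x = y) ->
  exists z, is_zero add mul z /\ forall x, A x <-> x = z.
Proof.
  intros kappa_eq. destruct ideal_A as [[z Az] _].
  assert (absorb : forall a b, A a -> A b -> add a b = b).
  { intros a b Aa Ab. apply kappa_eq. exists b, (add a b).
    repeat split; auto using ideal_add. apply addC. }
  assert (A_z : forall a, A a -> a = z).
  { intros a Aa. now rewrite <- (absorb z a Az Aa), addC, absorb. }
  exists z. split.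
  - intros r. repeat split; auto using ideal_mull, ideal_mulr.
    apply kappa_eq. exists z, (add z z). repeat split; auto using ideal_add.
    now rewrite (addC z r), addA.
  - intros x. split; [apply A_z | now intros ->].
Qed.

End KIdealsAndKCongruences.

Lemma k_simple_k_congruence_simple (R : Type) (add mul : R -> R -> R) :
  is_semiring add mul -> k_simple add mul -> k_congruence_simple add mul.
Proof.
  intros semiring_R simple th [_ [A [ideal_A th_kappa]]].
  destruct (simple _ (k_closure_k_ideal R add mul semiring_R A ideal_A))
    as [full | [z [zero_z closure_z]]].
  - left. intros x y. apply th_kappa.
    now apply (kappa_full_of_k_closure_full R add mul semiring_R A ideal_A).
  - right. intros x y. apply iff_trans with (kappa add A x y); [apply th_kappa|].
    now apply (kappa_eq_of_k_closure_zero R add mul semiring_R A ideal_A z).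
Qed.

Lemma k_congruence_simple_k_simple (R : Type) (add mul : R -> R -> R) :
  is_semiring add mul -> k_congruence_simple add mul -> k_simple add mul.
Proof.
  intros semiring_R simple A [ideal_A closed].
  destruct (simple _ (kappa_k_congruence R add mul semiring_R A ideal_A))
    as [full | kappa_eq].
  - left. now apply (k_ideal_full_of_kappa_full R add mul A ideal_A).
  - right. now apply (ideal_zero_of_kappa_eq R add mul semiring_R A ideal_A).
Qed.

Theorem theorem4p4 (R : Type) (add mul : R -> R -> R) :
  is_semiring add mul ->
  (exists x y : R, x <> y) ->
  (k_simple add mul <-> k_congruence_simple add mul).
Proof.
  intros semiring_R _. split.
  - now apply k_simple_k_congruence_simple.
  - now apply k_congruence_simple_k_simple.
Qed.
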